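(* Let $(J,F,Y)$ be a pullback triple with $J:\mathcal X\to\mathcal H$, $F:\mathcal X\to\mathcal E$. Then the following are equivalent: (i) $F$ is a partial isometry; (ii) $\mathcal X=\mathcal N(J)\oplus\mathcal N(F)$ (orthogonal direct sum); (iii) $JF^*=0$; (iv) $J\,\mathcal N(F)$ is dense in $\mathcal H$.
   Context: For Hilbert spaces $\mathcal H,\mathcal X,\mathcal E$, a pullback triple $(J,F,Y)$ consists of $J:\mathcal X\to\mathcal H$, $F:\mathcal X\to\mathcal E$ bounded with dense range, $Y:\mathcal H\to\mathcal X$ a completion operator (densely defined injective linear map with dense range), with $\|u\|_{\mathcal X}^2=\|Ju\|^2+\|Fu\|_{\mathcal E}^2$ for all $u\in\mathcal X$ and $JYf=f$ for $f\in\mathcal D(Y)$. $\mathcal N(\cdot)$ denotes null space. *)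

From mathcomp Require Import all_boot all_order all_algebra.
From mathcomp Require Import reals complex.
Set Implicit Arguments. Unset Strict Implicit. Unset Printing Implicit Defensive.
Import Order.TTheory GRing.Theory Num.Theory.
Local Open Scope ring_scope.

Definition hnorm (R : realType) (V : lmodType R[i]) (ip : V -> V -> R[i])
  (x : V) : R := Num.sqrt (complex.Re (ip x x)).

Definition is_hilbert (R : realType) (V : lmodType R[i])
  (ip : V -> V -> R[i]) : Prop :=
  [/\ (forall (a : R[i]) (x y z : V), ip (a *: x + y) z = a * ip x z + ip y z),
      (forall x y : V, ip y x = conjc (ip x y)),
      (forall x : V, 0 <= ip x x),
      (forall x : V, ip x x = 0 -> x = 0)
    & (forall u : nat -> V,
         (forall eps : R, 0 < eps -> exists N : nat, forall m n : nat,
              (N <= m)%N -> (N <= n)%N -> hnorm ip (u m - u n) < eps) ->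
         exists l : V, forall eps : R, 0 < eps -> exists N : nat,
              forall n : nat, (N <= n)%N -> hnorm ip (u n - l) < eps)].

Definition is_dense (R : realType) (W : lmodType R[i]) (ipW : W -> W -> R[i])
  (S : W -> Prop) : Prop :=
  forall (w : W) (eps : R), 0 < eps -> exists2 s, S s & hnorm ipW (s - w) < eps.

Definition is_linear (R : realType) (V W : lmodType R[i]) (T : V -> W) : Prop :=
  forall (a : R[i]) (x y : V), T (a *: x + y) = a *: T x + T y.

Definition is_bounded (R : realType) (V W : lmodType R[i])
  (ipV : V -> V -> R[i]) (ipW : W -> W -> R[i]) (T : V -> W) : Prop :=
  exists M : R, forall x : V, hnorm ipW (T x) <= M * hnorm ipV x.

Definition bounded_dense_range (R : realType) (V W : lmodType R[i])
  (ipV : V -> V -> R[i]) (ipW : W -> W -> R[i]) (T : V -> W) : Prop :=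
  [/\ is_linear T, is_bounded ipV ipW T & is_dense ipW (fun w => exists x, T x = w)].

Definition completion_operator (R : realType) (V W : lmodType R[i])
  (ipV : V -> V -> R[i]) (ipW : W -> W -> R[i]) (D : V -> Prop) (Y : V -> W)
  : Prop :=
  [/\ D 0 /\ (forall (a : R[i]) (f g : V), D f -> D g -> D (a *: f + g)),
      is_dense ipV D,
      (forall (a : R[i]) (f g : V), D f -> D g -> Y (a *: f + g) = a *: Y f + Y g),
      (forall f g : V, D f -> D g -> Y f = Y g -> f = g)
    & is_dense ipW (fun x => exists2 f, D f & Y f = x)].

Definition pullback_triple (R : realType) (H X E : lmodType R[i])
  (ipH : H -> H -> R[i]) (ipX : X -> X -> R[i]) (ipE : E -> E -> R[i])
  (J : X -> H) (F : X -> E) (D : H -> Prop) (Y : H -> X) : Prop :=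
  [/\ bounded_dense_range ipX ipH J,
      bounded_dense_range ipX ipE F,
      completion_operator ipH ipX D Y,
      (forall u : X, hnorm ipX u ^+ 2 = hnorm ipH (J u) ^+ 2 + hnorm ipE (F u) ^+ 2)
    & (forall f : H, D f -> J (Y f) = f)].

Definition is_adjoint (R : realType) (V W : lmodType R[i])
  (ipV : V -> V -> R[i]) (ipW : W -> W -> R[i]) (T : V -> W) (G : W -> V)
  : Prop :=
  forall (x : V) (w : W), ipW (T x) w = ipV x (G w).

Definition partial_isometry (R : realType) (V W : lmodType R[i])
  (ipV : V -> V -> R[i]) (ipW : W -> W -> R[i]) (T : V -> W) : Prop :=
  forall x : V, (forall y : V, T y = 0 -> ipV x y = 0) ->
    hnorm ipW (T x) = hnorm ipV x.

Definition orth_direct_sum_kernels (R : realType) (X H E : lmodType R[i])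
  (ipX : X -> X -> R[i]) (J : X -> H) (F : X -> E) : Prop :=
  (forall a b : X, J a = 0 -> F b = 0 -> ipX a b = 0) /\
  (forall x : X, exists a b : X, [/\ J a = 0, F b = 0 & x = a + b]).

(* Polarization turns the norm identity |u|^2 = |Ju|^2 + |Fu|^2 into
   <u, v> = <Ju, Jv> + <Fu, Fv>.  Hence N(J) and N(F) are orthogonal, F is
   isometric at x exactly when J x = 0, and N(J) lies in the orthogonal
   complement N(F)^perp; each of (i)-(iv) says that N(J) = N(F)^perp.
   (i) <-> (ii): project onto the closed subspace N(F).
   (iii) -> (ii): write x = k + z with k in N(J) and z in N(J)^perp; the adjoint
   F^* (which exists by the Riesz representation theorem) maps into N(J), so
   <F z, e> = <z, F^* e> = 0 for all e and z lies in N(F).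
   (ii) -> (iv): J N(F) is the whole range of J, which is dense.
   (iv) -> (i): if x is in N(F)^perp then J x is orthogonal to the dense set
   J N(F), hence J x = 0. *)

From mathcomp Require Import all_boot all_order all_algebra.
From mathcomp Require Import boolp classical_sets reals complex.
From mathcomp Require Import ring lra.
Set Implicit Arguments. Unset Strict Implicit. Unset Printing Implicit Defensive.
Import Order.TTheory GRing.Theory Num.Theory.
Local Open Scope ring_scope.
Local Open Scope complex_scope.

Lemma ler0_of_le_mul_sqr (R : realType) (r c : R) : 0 <= c ->
  (forall eps, 0 < eps -> r <= c * eps ^+ 2) -> r <= 0.
Proof.
move=> c0 h; apply/ler_addgt0Pr => e he; rewrite add0r.
have c1 : 0 < c + 1 by lra.
pose t := e / (c + 1).
have t0 : 0 < t by rewrite divr_gt0.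
have st : 0 < Num.sqrt t by rewrite sqrtr_gt0.
have rct : r <= c * t by have := h _ st; rewrite sqr_sqrtr // ltW.
have : t * (c + 1) = e by rewrite /t mulfVK // gt_eqF.
nra.
Qed.

Section SquaredModulus.
Variable R : realType.

Definition abs2 (c : R[i]) : R := complex.Re c ^+ 2 + complex.Im c ^+ 2.

Lemma abs2_ge0 c : 0 <= abs2 c.
Proof. by rewrite /abs2 addr_ge0 // sqr_ge0. Qed.

Lemma mulcJ c : c * conjc c = (abs2 c)%:C.
Proof.
case: c => a b; rewrite /abs2 /=; simpc.
by apply/eqP; rewrite eq_complex /=; apply/andP; split; apply/eqP; ring.
Qed.

Lemma abs2_eq0 c : abs2 c = 0 -> c = 0.
Proof.
case: c => a b; rewrite /abs2 /= => h.
have -> : a = 0 by apply/eqP; rewrite -sqrf_eq0 eq_le sqr_ge0 andbT -h lerDl sqr_ge0.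
have -> : b = 0 by apply/eqP; rewrite -sqrf_eq0 eq_le sqr_ge0 andbT -h lerDr sqr_ge0.
by [].
Qed.

Lemma abs2_real (r : R) : abs2 r%:C = r ^+ 2.
Proof. by rewrite /abs2 /= expr0n addr0. Qed.

Lemma abs2N c : abs2 (- c) = abs2 c.
Proof. by case: c => a b; rewrite /abs2 /= !sqrrN. Qed.

Lemma real_complex_eq0 (r : R) : (r%:C == 0 :> R[i]) = (r == 0).
Proof. by rewrite eq_complex /= eqxx andbT. Qed.

End SquaredModulus.

Section InnerProduct.
Variables (R : realType) (V : lmodType R[i]) (ip : V -> V -> R[i]).
Hypothesis hV : is_hilbert ip.

Lemma ipDl x y z : ip (x + y) z = ip x z + ip y z.
Proof. by case: hV => h _ _ _ _; have := h 1 x y z; rewrite scale1r mul1r. Qed.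

Lemma ip0l z : ip 0 z = 0.
Proof. by apply: (@addrI _ (ip 0 z)); rewrite -ipDl !addr0. Qed.

Lemma ipZl a x z : ip (a *: x) z = a * ip x z.
Proof. by case: hV => h _ _ _ _; have := h a x 0 z; rewrite !addr0 ip0l addr0. Qed.

Lemma ipC x y : ip y x = conjc (ip x y).
Proof. by case: hV. Qed.

Lemma ipDr x y z : ip z (x + y) = ip z x + ip z y.
Proof. by rewrite ipC ipDl rmorphD (ipC x z) (ipC y z). Qed.

Lemma ipZr a x z : ip z (a *: x) = conjc a * ip z x.
Proof. by rewrite ipC ipZl rmorphM (ipC x z). Qed.

Lemma ip0r z : ip z 0 = 0.
Proof. by rewrite ipC ip0l conjc0. Qed.

Lemma ipNl x z : ip (- x) z = - ip x z.
Proof. by rewrite -scaleN1r ipZl mulN1r. Qed.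

Lemma ipNr x z : ip z (- x) = - ip z x.
Proof. by rewrite -scaleN1r ipZr rmorphN1 mulN1r. Qed.

Lemma ipBl x y z : ip (x - y) z = ip x z - ip y z.
Proof. by rewrite ipDl ipNl. Qed.

Lemma ipBr x y z : ip z (x - y) = ip z x - ip z y.
Proof. by rewrite ipDr ipNr. Qed.

Definition sqnorm x : R := complex.Re (ip x x).

Lemma sqnorm_ge0 x : 0 <= sqnorm x.
Proof. by case: hV => _ _ h _ _; have := h x; rewrite lecE => /andP[]. Qed.

Lemma ipxx x : ip x x = (sqnorm x)%:C.
Proof.
case: hV => _ _ h _ _; have := ger0_Im (h x).
by rewrite /sqnorm; case: (ip x x) => a b /= ->.
Qed.

Lemma ipxx_eq0 x : ip x x = 0 -> x = 0.
Proof. by case: hV => _ _ _ h _; apply: h. Qed.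

Lemma sqnorm_eq0 x : sqnorm x = 0 -> x = 0.
Proof. by move=> x0; apply: ipxx_eq0; rewrite ipxx x0. Qed.

Lemma hnormE x : hnorm ip x = Num.sqrt (sqnorm x).
Proof. by []. Qed.

Lemma hnorm_sqr x : hnorm ip x ^+ 2 = sqnorm x.
Proof. by rewrite /hnorm sqr_sqrtr // sqnorm_ge0. Qed.

Lemma hnorm_ge0 x : 0 <= hnorm ip x.
Proof. exact: sqrtr_ge0. Qed.

Lemma hnorm_lt x eps : 0 < eps -> (hnorm ip x < eps) = (sqnorm x < eps ^+ 2).
Proof. by move=> eps0; rewrite -hnorm_sqr ltr_pXn2r // nnegrE ?hnorm_ge0 // ltW. Qed.

Lemma sqnormD a b : sqnorm (a + b) = sqnorm a + sqnorm b + 2 * complex.Re (ip a b).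
Proof.
apply: complexI; rewrite -ipxx ipDl !ipDr (ipC a b) !ipxx.
case: (ip a b) => x y /=.
by apply/eqP; rewrite eq_complex /=; apply/andP; split; apply/eqP; ring.
Qed.

Lemma sqnormN a : sqnorm (- a) = sqnorm a.
Proof. by apply: complexI; rewrite -!ipxx ipNl ipNr opprK. Qed.

Lemma sqnormB a b : sqnorm (a - b) = sqnorm a + sqnorm b - 2 * complex.Re (ip a b).
Proof. by rewrite sqnormD sqnormN ipNr; case: (ip a b) => u w /=; ring. Qed.

Lemma parallelogram a b : sqnorm (a + b) + sqnorm (a - b) = 2 * sqnorm a + 2 * sqnorm b.
Proof. by rewrite sqnormD sqnormB; ring. Qed.

Lemma sqnorm_sub_proj z k : sqnorm k != 0 ->
  sqnorm (z - (ip z k / (sqnorm k)%:C) *: k) = sqnorm z - abs2 (ip z k) / sqnorm k.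
Proof.
move=> k0; apply: complexI.
rewrite -[LHS]ipxx ipBl !ipBr !ipZl !ipZr (ipC z k) !ipxx.
have k0C : (sqnorm k)%:C != 0 :> R[i] by rewrite real_complex_eq0.
rewrite rmorphM fmorphV [X in _ / X]conjc_real.
by rewrite rmorphB rmorphM fmorphV /= -mulcJ; field.
Qed.

Lemma cauchy_schwarz z k : abs2 (ip z k) <= sqnorm z * sqnorm k.
Proof.
have [k0|k0] := eqVneq (sqnorm k) 0.
  by rewrite k0 mulr0 (sqnorm_eq0 k0) ip0r /abs2 /= expr0n /= addr0.
have := sqnorm_ge0 (z - (ip z k / (sqnorm k)%:C) *: k).
rewrite sqnorm_sub_proj // subr_ge0 ler_pdivrMr //.
by rewrite lt_def k0 sqnorm_ge0.
Qed.

Lemma hnormD_le a b : hnorm ip (a + b) <= hnorm ip a + hnorm ip b.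
Proof.
have na := hnorm_ge0 a; have nb := hnorm_ge0 b; have nab := hnorm_ge0 (a + b).
have re_le : complex.Re (ip a b) <= hnorm ip a * hnorm ip b.
  have : complex.Re (ip a b) ^+ 2 <= (hnorm ip a * hnorm ip b) ^+ 2.
    rewrite exprMn !hnorm_sqr; apply: le_trans (cauchy_schwarz a b).
    by rewrite /abs2 lerDl sqr_ge0.
  have : 0 <= hnorm ip a * hnorm ip b by apply: mulr_ge0.
  nra.
have : hnorm ip (a + b) ^+ 2 <= (hnorm ip a + hnorm ip b) ^+ 2.
  by rewrite sqrrD !hnorm_sqr sqnormD; lra.
nra.
Qed.

Lemma parallelogram_midpoint x y1 y2 :
  sqnorm (y1 - y2) + 4 * sqnorm (x - 2^-1 *: (y1 + y2)) =
  2 * sqnorm (x - y1) + 2 * sqnorm (x - y2).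
Proof.
have half : 2^-1 *: (y1 + y2) + 2^-1 *: (y1 + y2) = y1 + y2.
  by rewrite -scalerDl -[RHS]scale1r; congr (_ *: _); field.
have sum : (x - 2^-1 *: (y1 + y2)) + (x - 2^-1 *: (y1 + y2)) = (x - y2) + (x - y1).
  by rewrite addrACA -opprD half [RHS]addrACA -opprD [y2 + y1]addrC.
have diff : (x - y2) - (x - y1) = y1 - y2 by rewrite opprB addrC addrA subrK.
have := parallelogram (x - y2) (x - y1); rewrite -sum diff sqnormD /sqnorm.
lra.
Qed.

Lemma polarization u v :
  2 * ip u v = ip (u + v) (u + v) - ip u u - ip v v +
     'i * (ip (u + 'i *: v) (u + 'i *: v) - ip u u - ip v v).
Proof.
have conj_i : conjc ('i : R[i]) = - 'i by apply/eqP; rewrite eq_complex /= oppr0 !eqxx.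
have i2 : ('i : R[i]) * 'i = -1 by rewrite -expr2 sqr_i.
rewrite !ipDl !ipDr !ipZl !ipZr conj_i.
transitivity (2 * ip u v + (1 + 'i * 'i) * (ip v u - ip u v - 'i * ip v v)).
  by rewrite i2 addrN mul0r addr0.
ring.
Qed.

End InnerProduct.

Section LinearMap.
Variables (R : realType) (V W : lmodType R[i]) (T : V -> W).
Hypothesis hT : is_linear T.

Lemma is_linearD x y : T (x + y) = T x + T y.
Proof. by have := hT 1 x y; rewrite !scale1r. Qed.

Lemma is_linear0 : T 0 = 0.
Proof. by apply: (@addrI _ (T 0)); rewrite -is_linearD !addr0. Qed.

Lemma is_linearZ a x : T (a *: x) = a *: T x.
Proof. by have := hT a x 0; rewrite !addr0 is_linear0 addr0. Qed.

Lemma is_linear_kernel a u v : T u = 0 -> T v = 0 -> T (a *: u + v) = 0.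
Proof. by move=> Tu Tv; rewrite hT Tu Tv scaler0 addr0. Qed.

Lemma is_linearB x y : T (x - y) = T x - T y.
Proof. by rewrite is_linearD -scaleN1r is_linearZ scaleN1r. Qed.

End LinearMap.

Lemma sqnorm_bounded_lt (R : realType) (V W : lmodType R[i]) (ipV : V -> V -> R[i])
  (ipW : W -> W -> R[i]) (hW : is_hilbert ipW) (T : V -> W) (M : R)
  (hM : forall x, hnorm ipW (T x) <= M * hnorm ipV x) v eps :
  hnorm ipV v < eps -> sqnorm ipW (T v) <= M ^+ 2 * eps ^+ 2.
Proof.
move=> v_eps; rewrite -(hnorm_sqr hW).
have := hM v; have := hnorm_ge0 ipW (T v); have := hnorm_ge0 ipV v.
move: v_eps; move: (hnorm ipW (T v)) (hnorm ipV v) => a b b_eps b0 a0 a_le.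
have : a ^+ 2 <= M ^+ 2 * b ^+ 2 by rewrite -exprMn; nra.
have : M ^+ 2 * b ^+ 2 <= M ^+ 2 * eps ^+ 2 by rewrite ler_wpM2l ?sqr_ge0 //; nra.
lra.
Qed.

Lemma bounded_kernel_closed (R : realType) (V W : lmodType R[i]) (ipV : V -> V -> R[i])
  (ipW : W -> W -> R[i]) (hW : is_hilbert ipW) (T : V -> W)
  (hT : is_linear T) (hb : is_bounded ipV ipW T) l :
  (forall eps, 0 < eps -> exists2 x, T x = 0 & hnorm ipV (x - l) < eps) -> T l = 0.
Proof.
case: hb => M hM near; apply: (sqnorm_eq0 hW); apply/eqP.
rewrite eq_le sqnorm_ge0 // andbT; apply: (ler0_of_le_mul_sqr (sqr_ge0 M)).
move=> eps /near [x Tx /(sqnorm_bounded_lt hW hM)].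
by rewrite (is_linearB hT) Tx sub0r sqnormN.
Qed.

Lemma lef_invS (R : realType) (m n : nat) : (m <= n)%N -> n.+1%:R^-1 <= m.+1%:R^-1 :> R.
Proof. by move=> mn; rewrite lef_pV2 ?posrE ?ltr0Sn // ler_nat ltnS. Qed.

Section ClosedSubspace.
Variables (R : realType) (V : lmodType R[i]) (ip : V -> V -> R[i]).
Hypothesis hV : is_hilbert ip.
Variable K : V -> Prop.
Hypotheses (K0 : K 0) (Klin : forall a u v, K u -> K v -> K (a *: u + v))
  (Kcl : forall l, (forall eps, 0 < eps -> exists2 u, K u & hnorm ip (u - l) < eps) -> K l).

Section MinimizingSequence.
Variables (x : V) (d : R) (ys : nat -> V).
Hypotheses (d_le : forall y, K y -> d <= sqnorm ip (x - y)) (Kys : forall n, K (ys n))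
  (ys_d : forall n, sqnorm ip (x - ys n) < d + n.+1%:R^-1).

Lemma minimizing_cauchy eps : 0 < eps -> exists N, forall m n,
  (N <= m)%N -> (N <= n)%N -> hnorm ip (ys m - ys n) < eps.
Proof.
move=> eps0; have eps4 : 0 < eps ^+ 2 / 4 by rewrite divr_gt0 // exprn_gt0.
have [N] := ltr_add_invr eps4; rewrite add0r => N_eps.
exists N => m n Nm Nn; rewrite hnorm_lt //.
have Kmid : K (2^-1 *: (ys m + ys n)).
  by rewrite -[_ *: _]addr0; apply: Klin => //; rewrite -[ys m]scale1r; apply: Klin.
have := parallelogram_midpoint hV x (ys m) (ys n); have := d_le Kmid.
have := ys_d m; have := ys_d n; have := lef_invS R Nm; have := lef_invS R Nn.
move: N_eps; move: (m.+1%:R^-1 : R) (n.+1%:R^-1 : R) (N.+1%:R^-1 : R) => im in_ iN.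
lra.
Qed.

Hypothesis d0 : 0 <= d.

Lemma minimizing_limit l :
  (forall eps, 0 < eps -> exists N, forall n, (N <= n)%N -> hnorm ip (ys n - l) < eps) ->
  sqnorm ip (x - l) <= d.
Proof.
move=> ys_l; rewrite -(hnorm_sqr hV) -(sqr_sqrtr d0).
rewrite ler_pXn2r ?nnegrE ?hnorm_ge0 ?sqrtr_ge0 //.
apply/ler_addgt0Pr => e e0; have e2 : 0 < e / 2 by rewrite divr_gt0.
have [N1 N1_e] := ys_l _ e2; have [N2] := ltr_add_invr (exprn_gt0 2 e2).
rewrite add0r => N2_e; set n := maxn N1 N2.
have near_l := N1_e n (leq_maxl _ _).
have near_d : hnorm ip (x - ys n) < Num.sqrt d + e / 2.
  rewrite hnorm_lt ?ltr_wpDl ?sqrtr_ge0 //; apply: (lt_le_trans (ys_d n)).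
  have := le_lt_trans (lef_invS R (leq_maxr N1 N2)) N2_e; have := sqrtr_ge0 d.
  rewrite sqrrD sqr_sqrtr //; move: (n.+1%:R^-1 : R) => t; nra.
have := hnormD_le hV (x - ys n) (ys n - l); rewrite addrA subrK.
lra.
Qed.

End MinimizingSequence.

Lemma closest_point x :
  exists2 l, K l & forall y, K y -> sqnorm ip (x - l) <= sqnorm ip (x - y).
Proof.
pose E : set R := fun r => exists2 y, K y & r = sqnorm ip (x - y).
have E_inf : has_inf E.
  split; first by exists (sqnorm ip (x - 0)), 0.
  by exists 0 => r [y _ ->]; apply: sqnorm_ge0.
pose d := inf E.
have d_le y : K y -> d <= sqnorm ip (x - y).
  by move=> Ky; apply: ge_inf; [case: E_inf | exists y].
have d0 : 0 <= d by apply: lb_le_inf; [case: E_inf | move=> r [y _ ->]; apply: sqnorm_ge0].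
have near_inf n : exists y, K y /\ sqnorm ip (x - y) < d + n.+1%:R^-1.
  have n_pos : 0 < n.+1%:R^-1 :> R by rewrite invr_gt0.
  by have [r [y Ky ->] r_lt] := inf_adherent n_pos E_inf; exists y.
have [ys ys_spec] := choice near_inf.
have Kys n : K (ys n) by case: (ys_spec n).
have ys_d n : sqnorm ip (x - ys n) < d + n.+1%:R^-1 by case: (ys_spec n).
have [l ys_l] : exists l, forall eps, 0 < eps ->
    exists N, forall n, (N <= n)%N -> hnorm ip (ys n - l) < eps.
  by case: hV => _ _ _ _ complete; apply: complete (minimizing_cauchy d_le Kys ys_d).
exists l => [|y Ky].
  by apply: Kcl => eps /ys_l [N N_eps]; exists (ys N); [exact: Kys | exact: N_eps].
exact: le_trans (minimizing_limit ys_d d0 ys_l) (d_le y Ky).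
Qed.

Lemma closest_point_orthogonal x l :
  K l -> (forall y, K y -> sqnorm ip (x - l) <= sqnorm ip (x - y)) ->
  forall y, K y -> ip (x - l) y = 0.
Proof.
move=> Kl l_min y Ky.
have [y0|y_neq0] := eqVneq (sqnorm ip y) 0; first by rewrite (sqnorm_eq0 hV y0) ip0r.
have y_pos : 0 < sqnorm ip y by rewrite lt_def y_neq0 sqnorm_ge0.
set t := ip (x - l) y / (sqnorm ip y)%:C.
have Kt : K (t *: y + l) by apply: Klin.
have := l_min _ Kt; rewrite opprD addrA [x - _ - l]addrAC sqnorm_sub_proj //.
set b := abs2 _ / _ => b_le0; have : b <= 0 by lra.
rewrite ler_pdivrMr // mul0r => abs2_le0; apply: abs2_eq0.
by apply/eqP; rewrite eq_le abs2_le0 abs2_ge0.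
Qed.

Lemma orthogonal_decomposition x :
  exists k z, [/\ K k, (forall y, K y -> ip z y = 0) & x = k + z].
Proof.
have [l Kl l_min] := closest_point x.
exists l, (x - l); split; [done | exact: closest_point_orthogonal | by rewrite addrC subrK].
Qed.

End ClosedSubspace.

Lemma riesz_representation (R : realType) (V : lmodType R[i]) (ip : V -> V -> R[i])
  (hV : is_hilbert ip) (phi : V -> R[i]^o) (phi_lin : is_linear phi)
  (phi_closed : forall l,
    (forall eps, 0 < eps -> exists2 u, phi u = 0 & hnorm ip (u - l) < eps) -> phi l = 0) :
  exists w, forall x, phi x = ip x w.
Proof.
have [[x0 phi_x0]|phi_eq0] := EM (exists x0, phi x0 != 0); last first.
  exists 0 => x; rewrite (ip0r hV); apply/eqP/contraT => phi_x.
  by case: phi_eq0; exists x.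
have [k [z [phi_k z_orth x0_eq]]] :=
  orthogonal_decomposition hV (is_linear0 phi_lin) (is_linear_kernel phi_lin) phi_closed x0.
have phi_z : phi z != 0 by move: phi_x0; rewrite x0_eq (is_linearD phi_lin) phi_k add0r.
have z_neq0 : (sqnorm ip z)%:C != 0 :> R[i].
  by rewrite real_complex_eq0; apply: contra phi_z => /eqP/(sqnorm_eq0 hV) ->; rewrite is_linear0.
(* z is orthogonal to the kernel of phi, which contains x - (phi x / phi z) z. *)
exists (conjc (phi z / (sqnorm ip z)%:C) *: z) => x.
rewrite (ipZr hV) conjcK.
pose c := phi x / phi z.
have : phi (x - c *: z) = 0.
  by rewrite (is_linearB phi_lin) (is_linearZ phi_lin) /c [_ *: _]mulfVK ?subrr.
move/z_orth; rewrite (ipC hV) => /eqP; rewrite conjc_eq0 => /eqP.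
rewrite (ipBl hV) (ipZl hV) (ipxx hV) => /eqP; rewrite subr_eq0 => /eqP ->.
by rewrite /c; field; apply/andP.
Qed.

Section NormSplitting.
Variables (R : realType) (H X E : lmodType R[i]).
Variables (ipH : H -> H -> R[i]) (ipX : X -> X -> R[i]) (ipE : E -> E -> R[i]).
Hypotheses (hH : is_hilbert ipH) (hX : is_hilbert ipX) (hE : is_hilbert ipE).
Variables (J : X -> H) (F : X -> E).
Hypotheses (Jlin : is_linear J) (Flin : is_linear F).
Hypothesis norm_split :
  forall u, hnorm ipX u ^+ 2 = hnorm ipH (J u) ^+ 2 + hnorm ipE (F u) ^+ 2.

Lemma sqnorm_split u : sqnorm ipX u = sqnorm ipH (J u) + sqnorm ipE (F u).
Proof. by rewrite -(hnorm_sqr hX) -(hnorm_sqr hH) -(hnorm_sqr hE). Qed.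

Lemma ip_split u v : ipX u v = ipH (J u) (J v) + ipE (F u) (F v).
Proof.
have ipxx_split w : ipX w w = ipH (J w) (J w) + ipE (F w) (F w).
  by rewrite (ipxx hX) (ipxx hH) (ipxx hE) sqnorm_split rmorphD.
apply: (@mulfI _ (2 : R[i])); first by rewrite pnatr_eq0.
rewrite mulrDr (polarization hX) (polarization hH (J u)) (polarization hE (F u)).
rewrite !ipxx_split !(is_linearD Jlin) !(is_linearD Flin).
by rewrite !(is_linearZ Jlin) !(is_linearZ Flin); ring.
Qed.

Lemma kernels_orthogonal a b : J a = 0 -> F b = 0 -> ipX a b = 0.
Proof. by move=> Ja Fb; rewrite ip_split Ja Fb (ip0l hH) (ip0r hE) addr0. Qed.

Lemma isometric_at_iff_kerJ x : hnorm ipE (F x) = hnorm ipX x <-> J x = 0.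
Proof.
split=> [iso | Jx]; last by rewrite !hnormE sqnorm_split Jx /sqnorm (ip0l hH) add0r.
apply: (sqnorm_eq0 hH); have := sqnorm_split x.
by rewrite -(hnorm_sqr hE) iso (hnorm_sqr hX); lra.
Qed.

Hypotheses (Jbd : is_bounded ipX ipH J) (Fbd : is_bounded ipX ipE F).

Lemma partial_isometry_orth_sum :
  partial_isometry ipX ipE F <-> orth_direct_sum_kernels ipX J F.
Proof.
split=> [F_pi | [_ decomp] x x_perp].
  split=> [|x]; first exact: kernels_orthogonal.
  have [k [z [Fk z_perp ->]]] := orthogonal_decomposition hX (is_linear0 Flin)
    (is_linear_kernel Flin) (bounded_kernel_closed hE Flin Fbd) x.
  exists z, k; split=> //; last by rewrite addrC.
  by apply/isometric_at_iff_kerJ; apply: F_pi.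
have [a [b [Ja Fb x_eq]]] := decomp x.
have b0 : b = 0.
  by apply: (ipxx_eq0 hX); move: (x_perp b Fb); rewrite x_eq (ipDl hX) kernels_orthogonal ?add0r.
by apply/isometric_at_iff_kerJ; rewrite x_eq b0 addr0.
Qed.

Lemma adjoint_exists : exists Fs, is_adjoint ipX ipE F Fs.
Proof.
case: Fbd => M hM.
have rep e : exists w, forall x, ipE (F x) e = ipX x w.
  apply: (riesz_representation hX (phi := fun x => ipE (F x) e : R[i]^o)).
    by move=> a x y; rewrite Flin (ipDl hE) (ipZl hE).
  move=> l near; apply: abs2_eq0; apply/eqP; rewrite eq_le abs2_ge0 andbT.
  apply: (@ler0_of_le_mul_sqr _ _ (M ^+ 2 * sqnorm ipE e)).
    by rewrite mulr_ge0 ?sqr_ge0 ?sqnorm_ge0.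
  move=> eps /near [x Fx_e /(sqnorm_bounded_lt hE hM) small].
  have -> : ipE (F l) e = - ipE (F (x - l)) e.
    by rewrite (is_linearB Flin) (ipBl hE) Fx_e sub0r opprK.
  rewrite abs2N; apply: le_trans (cauchy_schwarz hE _ _) _.
  by rewrite mulrAC; apply: ler_wpM2r; rewrite ?sqnorm_ge0.
by have [Fs Fs_adj] := choice rep; exists Fs.
Qed.

Lemma partial_isometry_adjoint_kerJ : partial_isometry ipX ipE F ->
  forall Fs, is_adjoint ipX ipE F Fs -> forall e, J (Fs e) = 0.
Proof.
move=> F_pi Fs Fs_adj e; apply/isometric_at_iff_kerJ; apply: F_pi => y Fy.
by rewrite (ipC hX) -Fs_adj Fy (ip0l hE) conjc0.
Qed.

Lemma orth_sum_of_adjoint_kerJ :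
  (forall Fs, is_adjoint ipX ipE F Fs -> forall e, J (Fs e) = 0) ->
  orth_direct_sum_kernels ipX J F.
Proof.
move=> adj_kerJ; have [Fs Fs_adj] := adjoint_exists.
split=> [|x]; first exact: kernels_orthogonal.
have [k [z [Jk z_perp ->]]] := orthogonal_decomposition hX (is_linear0 Jlin)
  (is_linear_kernel Jlin) (bounded_kernel_closed hH Jlin Jbd) x.
exists k, z; split=> //.
by apply: (ipxx_eq0 hE); rewrite Fs_adj z_perp // adj_kerJ.
Qed.

Lemma dense_of_orth_sum : is_dense ipH (fun w => exists x, J x = w) ->
  orth_direct_sum_kernels ipX J F ->
  is_dense ipH (fun h => exists2 x, F x = 0 & J x = h).
Proof.
move=> Jden [_ decomp] w eps eps0.
have [_ [x <-] near] := Jden w eps eps0.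
have [a [b [Ja Fb x_eq]]] := decomp x.
exists (J b); first by exists b.
by rewrite x_eq (is_linearD Jlin) Ja add0r in near.
Qed.

Lemma partial_isometry_of_dense :
  is_dense ipH (fun h => exists2 x, F x = 0 & J x = h) -> partial_isometry ipX ipE F.
Proof.
(* If w = J x <> 0, density gives J b with F b = 0 and |w - J b| < |w|; since
   w is orthogonal to J b, Cauchy-Schwarz yields |w|^4 <= |w|^2 |w - J b|^2 < |w|^4. *)
move=> dense x x_perp; apply/isometric_at_iff_kerJ.
set w := J x.
have w_perp b : F b = 0 -> ipH w (J b) = 0.
  by move=> Fb; have := x_perp b Fb; rewrite ip_split Fb (ip0r hE) addr0.
apply: (sqnorm_eq0 hH); apply/eqP/contraT => w_neq0.
have w_pos : 0 < sqnorm ipH w by rewrite lt_def w_neq0 sqnorm_ge0.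
have hw : 0 < hnorm ipH w by rewrite hnormE sqrtr_gt0.
have [_ [b Fb <-] near] := dense w _ hw.
move: near; rewrite (hnorm_lt hH _ hw) (hnorm_sqr hH) -(sqnormN hH) opprB => near.
have := cauchy_schwarz hH w (w - J b).
rewrite (ipBr hH) w_perp // subr0 (ipxx hH) abs2_real.
by move: near w_pos; move: (sqnorm ipH w) (sqnorm ipH (w - J b)) => a c; nra.
Qed.

End NormSplitting.

Unset Implicit Arguments.

Theorem mainTheorem6 (R : realType) (H X E : lmodType R[i])
  (ipH : H -> H -> R[i]) (ipX : X -> X -> R[i]) (ipE : E -> E -> R[i])
  (hH : is_hilbert ipH) (hX : is_hilbert ipX) (hE : is_hilbert ipE)
  (J : X -> H) (F : X -> E) (D : H -> Prop) (Y : H -> X)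
  (hPB : pullback_triple ipH ipX ipE J F D Y) :
  let i := partial_isometry ipX ipE F in
  let ii := orth_direct_sum_kernels ipX J F in
  let iii := forall Fs : E -> X, is_adjoint ipX ipE F Fs -> forall e : E, J (Fs e) = 0 in
  let iv := is_dense ipH (fun h => exists2 x, F x = 0 & J x = h) in
  [/\ i <-> ii, i <-> iii & i <-> iv].
Proof.
move=> i ii iii iv; rewrite {}/i {}/ii {}/iii {}/iv.
case: hPB => [[Jlin Jbd Jden] [Flin Fbd _] _ norm_split _].
have i_ii := partial_isometry_orth_sum hH hX hE Jlin Flin norm_split Fbd.
split=> //; split.
- exact: (partial_isometry_adjoint_kerJ hH hX hE norm_split).
- by move=> /(orth_sum_of_adjoint_kerJ hH hX hE Jlin Flin norm_split Jbd Fbd)/i_ii.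
- by move=> /i_ii/(dense_of_orth_sum Jlin Jden).
- exact: (partial_isometry_of_dense hH hX hE Jlin Flin norm_split).
Qed.
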